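(* Let $\mathcal{F}_2$ be the field of (locally) analytic functions of $(x,y)$, $X=\partial/\partial x$, $Y=\partial/\partial y$, and $\mathcal{F}_2((X))$ the skew field of formal pseudodifferential operators in $X$ with coefficients in $\mathcal{F}_2$. Let $u\in\mathcal{F}_2$ and $M=Y-X^{-1}\cdot u\in\mathcal{F}_2((X))[Y]$. Let $n\ge1$ be an integer and let $P\in\mathcal{F}_2((X))$ have order $n$ and satisfy $[P,M]=0$. If $R\in\mathcal{F}_2((X))$ satisfies $R^n=P$, then $[R,M]=0$.
   Context: $\mathcal{F}_2((X))$ consists of formal series $\sum_{i\ge0}p_{n-i}X^{n-i}$ with $p_j\in\mathcal{F}_2$, $n\in\mathbb{Z}$ (order $n$ if $p_n\neq0$), multiplied by the usual composition rule of pseudodifferential operators, $X^{k}\cdot a=\sum_{j\ge0}\binom{k}{j}a^{(j)}X^{k-j}$ ($a^{(j)}$ the $j$-th $x$-derivative, generalized binomial coefficients). $\mathcal{F}_2((X))[Y]$ is the ring of polynomials in $Y$ with coefficients in $\mathcal{F}_2((X))$, where $Y$ commutes with $X$ and $Y\cdot a=aY+\partial a/\partial y$ for $a\in\mathcal{F}_2$. $[A,B]=AB-BA$. *)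

From mathcomp Require Import all_boot all_order all_algebra.
Set Implicit Arguments. Unset Strict Implicit. Unset Printing Implicit Defensive.
Import Order.TTheory GRing.Theory Num.Theory.
Local Open Scope ring_scope.

(* A formal pseudodifferential operator  sum_{i>=0} ps_co i * X^(ps_ord - i)
   (coefficients written on the left), coefficients in F. *)
Record psdo (F : Type) := PSDO { ps_ord : int; ps_co : nat -> F }.
Arguments PSDO {F}.

Section PS.
Variable F : fieldType.
Variable dx : F -> F.

Definition ps_coef (A : psdo F) (t : int) : F :=
  if t <= ps_ord A then ps_co A `|ps_ord A - t|%N else 0.

(* equality of series (representations are not unique) *)
Definition ps_eq (A B : psdo F) : Prop := forall t, ps_coef A t = ps_coef B t.

Definition ps_zero : psdo F := PSDO 0 (fun _ => 0).
Definition ps_one : psdo F := PSDO 0 (fun i => (i == 0%N)%:R).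
Definition ps_const (a : F) : psdo F := PSDO 0 (fun i => if i == 0%N then a else 0).
Definition ps_Xpow (k : int) : psdo F := PSDO k (fun i => (i == 0%N)%:R).

Definition ps_add (A B : psdo F) : psdo F :=
  let o := Num.max (ps_ord A) (ps_ord B) in
  PSDO o (fun i => ps_coef A (o - i%:Z) + ps_coef B (o - i%:Z)).
Definition ps_opp (A : psdo F) : psdo F := PSDO (ps_ord A) (fun i => - ps_co A i).
Definition ps_map (f : F -> F) (A : psdo F) : psdo F :=
  PSDO (ps_ord A) (fun i => f (ps_co A i)).

Definition gbinom (z : int) (l : nat) : F :=
  (\prod_(k < l) ((z - k%:Z)%:~R : F)) / (l`!)%:R.

(* composition:  X^k . a = sum_j binom(k,j) a^(j) X^(k-j) *)
Definition ps_mul (A B : psdo F) : psdo F :=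
  PSDO (ps_ord A + ps_ord B) (fun s =>
    \sum_(i < s.+1) \sum_(j < (s - i).+1)
      ps_co A i * gbinom (ps_ord A - i%:Z) (s - i - j)
        * iter (s - i - j) dx (ps_co B j)).

Definition ps_exp (A : psdo F) (n : nat) : psdo F := iter n (ps_mul A) ps_one.

Definition ps_order (A : psdo F) (n : int) : Prop :=
  ps_coef A n != 0 /\ forall t, n < t -> ps_coef A t = 0.

End PS.

Section PSY.
Variable F : fieldType.
Variables dx dy : F -> F.

(* elements of F((X))[Y]: sequences [:: A_0; A_1; ...] meaning sum_k A_k Y^k *)
Definition psy_eq (S T : seq (psdo F)) : Prop :=
  forall k, ps_eq (nth (ps_zero F) S k) (nth (ps_zero F) T k).

Definition psy_add (S T : seq (psdo F)) : seq (psdo F) :=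
  mkseq (fun k => ps_add (nth (ps_zero F) S k) (nth (ps_zero F) T k))
        (maxn (size S) (size T)).
Definition psy_opp (S : seq (psdo F)) : seq (psdo F) := map (@ps_opp F) S.

(* (A Y^k)(B Y^l) = sum_j binom(k,j) A (d_y^j B) Y^(k-j+l), using
   Y a = a Y + a_y and [X, Y] = 0 (d_y applied coefficientwise to B) *)
Definition psy_mul (S T : seq (psdo F)) : seq (psdo F) :=
  mkseq (fun m =>
    \big[@ps_add F/ps_zero F]_(k < size S) \big[@ps_add F/ps_zero F]_(l < size T)
      \big[@ps_add F/ps_zero F]_(j < k.+1 | (k - j + l == m)%N)
        ps_map (fun a => a *+ 'C(k, j))
          (ps_mul dx (nth (ps_zero F) S k)
                     (ps_map (iter j dy) (nth (ps_zero F) T l))))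
    (size S + size T).

Definition psy_comm (S T : seq (psdo F)) : seq (psdo F) :=
  psy_add (psy_mul S T) (psy_opp (psy_mul T S)).

Definition Mop (u : F) : seq (psdo F) :=
  [:: ps_opp (ps_mul dx (ps_Xpow F (-1)) (ps_const u)); ps_one F].

End PSY.

From mathcomp Require Import all_boot all_order all_algebra.
From mathcomp Require Import ring zify.
Import Order.TTheory GRing.Theory Num.Theory.
Local Open Scope ring_scope.
Set Implicit Arguments. Unset Strict Implicit. Unset Printing Implicit Defensive.

(* Write M = Y + W with W = -X^-1 u. As Y commutes with X, the commutator of
   A in F((X)) with M has no Y-terms: it is D(A) = A W - W A - dA/dy, and D is a
   derivation of F((X)). If D(R) != 0, with leading terms r X^rho of R and
   c X^m of D(R), then D(R^n) = sum_i R^i D(R) R^(n-1-i) has leading term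
   n r^(n-1) c X^(m + (n-1) rho), which is nonzero in characteristic 0; but
   D(R^n) = D(P) = 0. Most of the work is the associativity of the composition
   of pseudodifferential operators, a Vandermonde identity for generalized
   binomial coefficients combined with the Leibniz rule. *)

Section GeneralizedBinomial.
Variable F : fieldType.
Hypothesis hchar : [pchar F] =i pred0.
Local Notation g := (gbinom F).

Lemma natF_neq0 (n : nat) : (0 < n)%N -> n%:R != 0 :> F.
Proof. by move/pcharf0P: hchar => ->; rewrite -lt0n. Qed.

Lemma factF_neq0 (n : nat) : n`!%:R != 0 :> F.
Proof. exact/natF_neq0/fact_gt0. Qed.

Lemma gbinom0 (z : int) : g z 0 = 1.
Proof. by rewrite /gbinom big_ord0 fact0 divr1. Qed.

Lemma gbinomS (z : int) (l : nat) : g z l.+1 * l.+1%:R = z%:~R * g (z - 1) l.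
Proof.
rewrite /gbinom big_ord_recl factS natrM subr0.
under eq_bigr => i _ do rewrite lift0 -addn1 PoszD opprD addrA addrAC.
by field; rewrite factF_neq0 addrC natr1 natF_neq0.
Qed.

Lemma gbinom0S (l : nat) : g 0 l.+1 = 0.
Proof. by apply: (mulIf (natF_neq0 (ltn0Sn l))); rewrite gbinomS !mul0r. Qed.

Lemma gbinom_vandermonde (N : nat) (x y : int) :
  \sum_(q < N.+1) g x (N - q) * g y q = g (x + y) N.
Proof.
elim: N x y => [|N IH] x y; first by rewrite big_ord1 !gbinom0 mulr1.
apply: (mulIf (natF_neq0 (ltn0Sn N))); rewrite gbinomS mulr_suml.
have split_factor (q : 'I_N.+2) : g x (N.+1 - q) * g y q * N.+1%:R =
    g x (N.+1 - q) * (N.+1 - q)%:R * g y q + g x (N.+1 - q) * (g y q * q%:R).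
  have hN : (N.+1 - q)%:R + q%:R = N.+1%:R :> F by rewrite -natrD subnK // -ltnS.
  by rewrite -hN; ring.
rewrite (eq_bigr _ (fun q _ => split_factor q)) big_split /=.
rewrite big_ord_recr /= subnn mulr0 mul0r addr0.
rewrite [X in _ + X]big_ord_recl /= !mulr0 add0r.
under eq_bigr => q _.
  rewrite subSn 1?gbinomS -1?mulrA //; last exact: ltnSE.
over.
under [X in _ + X]eq_bigr => q _ do rewrite /bump /= add1n subSS gbinomS mulrCA.
rewrite -!mulr_sumr !IH.
by rewrite [x - 1 + y]addrAC [x + (y - 1)]addrA rmorphD mulrDl.
Qed.

Lemma gbinom_mul_bin (a : int) (m p : nat) : (p <= m)%N ->
  g a m * 'C(m, p)%:R = g a p * g (a - p%:Z) (m - p).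
Proof.
move=> hpm; move: (m - p)%N (subnKC hpm) => k <-; rewrite /gbinom big_split_ord /=.
under [X in _ * X / _]eq_bigr => i _ do rewrite PoszD opprD addrA.
have hC : 'C(p + k, p)%:R != 0 :> F by rewrite natF_neq0 ?bin_gt0 ?leq_addr.
rewrite -(bin_fact (leq_addr k p)) addKn !natrM.
by field; rewrite !factF_neq0 hC.
Qed.

Lemma gbinom_convolution (a b : int) (r p : nat) : (p <= r)%N ->
  \sum_(q < (r - p).+1) g a (r - q) * 'C(r - q, p)%:R * g b q
  = g a p * g (a + b - p%:Z) (r - p).
Proof.
move=> hpr.
under eq_bigr => q _.
  have hq := ltn_ord q.
  rewrite gbinom_mul_bin; last lia.
  rewrite (_ : r - q - p = r - p - q)%N; last lia.
  rewrite -mulrA.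
over.
by rewrite -mulr_sumr gbinom_vandermonde addrAC.
Qed.

End GeneralizedBinomial.

Section TriangularSums.
Variable V : zmodType.

Definition trisum (n : nat) (T : nat -> nat -> V) : V :=
  \sum_(i < n.+1) \sum_(j < (n - i).+1) T i j.

Lemma eq_trisum n (T T' : nat -> nat -> V) :
  (forall i j, (i + j <= n)%N -> T i j = T' i j) -> trisum n T = trisum n T'.
Proof.
move=> eqT; apply: eq_bigr => i _; apply: eq_bigr => j _; apply: eqT.
by have := ltn_ord i; have := ltn_ord j; lia.
Qed.

Lemma trisum_eq0 n (T : nat -> nat -> V) :
  (forall i j, (i + j <= n)%N -> T i j = 0) -> trisum n T = 0.
Proof. by move=> T0; rewrite (eq_trisum T0) /trisum big1 // => i _; rewrite big1. Qed.

Lemma trisumD n (T1 T2 : nat -> nat -> V) :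
  trisum n (fun i j => T1 i j + T2 i j) = trisum n T1 + trisum n T2.
Proof. by rewrite /trisum -big_split; apply: eq_bigr => i _; rewrite big_split. Qed.

Lemma trisumN n (T : nat -> nat -> V) : trisum n (fun i j => - T i j) = - trisum n T.
Proof. by rewrite /trisum -sumrN; apply: eq_bigr => i _; rewrite sumrN. Qed.

Lemma sum_ord_cut (N d : nat) (f : nat -> V) : (d <= N)%N ->
  \sum_(i < N) f i = \sum_(i < d) f i + \sum_(i < N - d) f (d + i)%N.
Proof. by move/subnKC; move: (N - d)%N => k <-; rewrite big_split_ord. Qed.

Lemma trisum_shiftl s d (T : nat -> nat -> V) : (forall i j, (i < d)%N -> T i j = 0) ->
  trisum (s + d) T = trisum s (fun i j => T (d + i)%N j).
Proof.
move=> T0; rewrite /trisum (sum_ord_cut (d := d) (fun i => \sum_(j < (s + d - i).+1) T i j));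
  last by rewrite ltnW // ltnS leq_addl.
rewrite big1 ?add0r => [|i _]; last by rewrite big1 // => j _; apply: T0.
rewrite (_ : ((s + d).+1 - d = s.+1)%N); last lia.
by apply: eq_bigr => i _; rewrite (_ : (s + d - (d + i) = s - i)%N) //; lia.
Qed.

Lemma trisum_shiftr s d (T : nat -> nat -> V) : (forall i j, (j < d)%N -> T i j = 0) ->
  trisum (s + d) T = trisum s (fun i j => T i (d + j)%N).
Proof.
move=> T0; rewrite /trisum (sum_ord_cut (d := s.+1) (fun i => \sum_(j < (s + d - i).+1) T i j));
  last by rewrite ltnS leq_addr.
rewrite [X in _ + X]big1 ?addr0 => [|i _]; last first.
  by rewrite big1 // => j _; apply: T0; have := ltn_ord j; have := ltn_ord i; lia.
apply: eq_bigr => i _; rewrite (sum_ord_cut (d := d) (T i)); last by have := ltn_ord i; lia.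
rewrite big1 ?add0r => [|j _]; last exact: T0.
by rewrite (_ : ((s + d - i).+1 - d = (s - i).+1)%N) //; have := ltn_ord i; lia.
Qed.

Lemma trisum_box n N (T : nat -> nat -> V) : (n <= N)%N ->
  trisum n T = \sum_(i < N.+1) \sum_(j < N.+1) (if (i + j <= n)%N then T i j else 0).
Proof.
move=> leNn; rewrite /trisum.
rewrite (big_ord_widen _ (fun i => \sum_(j < (n - i).+1) T i j) (leNn : n.+1 <= N.+1)%N).
rewrite big_mkcond; apply: eq_bigr => i _; case: ifP => lt_in.
  rewrite (big_ord_widen _ (T i) (_ : (n - i).+1 <= N.+1)%N); last lia.
  rewrite big_mkcond; apply: eq_bigr => j _.
  by rewrite (_ : (j < (n - i).+1)%N = (i + j <= n)%N) //; lia.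
by rewrite big1 // => j _; rewrite ifF //; lia.
Qed.

Lemma sum_window (N lo r : nat) (h : nat -> V) : (lo + r <= N)%N ->
  \sum_(e < N.+1) (if (lo <= e <= lo + r)%N then h e else 0) = \sum_(l < r.+1) h (lo + l)%N.
Proof.
move=> hN; rewrite (sum_ord_cut (d := lo) (fun e => if (lo <= e <= lo + r)%N then h e else 0));
  last lia.
rewrite big1 ?add0r => [|e _]; last by rewrite ifF //; have := ltn_ord e; lia.
rewrite (big_ord_widen _ (fun l => h (lo + l)%N) (_ : r.+1 <= N.+1 - lo)%N); last lia.
rewrite [RHS]big_mkcond; apply: eq_bigr => l _.
by rewrite (_ : (lo <= lo + l <= lo + r)%N = (l < r.+1)%N) //; lia.
Qed.

Definition trisum3 (n : nat) (T : nat -> nat -> nat -> V) : V :=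
  \sum_(i < n.+1) \sum_(j < n.+1) \sum_(k < n.+1) (if (i + j + k <= n)%N then T i j k else 0).

Lemma eq_trisum3 n (T T' : nat -> nat -> nat -> V) :
  (forall i j k, (i + j + k <= n)%N -> T i j k = T' i j k) -> trisum3 n T = trisum3 n T'.
Proof.
move=> eqT; do 3!(apply: eq_bigr => ? _); case: ifP => // ?; exact: eqT.
Qed.

Lemma trisum3_rot n (T : nat -> nat -> nat -> V) :
  trisum3 n (fun j k i => T i j k) = trisum3 n T.
Proof.
rewrite /trisum3; under eq_bigr => j _ do rewrite exchange_big.
rewrite exchange_big; do 3!(apply: eq_bigr => ? _).
by rewrite [X in (X <= n)%N]addnC addnA.
Qed.

Lemma trisum_nested s (K : nat -> nat -> nat -> nat -> V) :
  trisum s (fun e k => trisum e (fun i j => K i j k e)) =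
  trisum3 s (fun i j k => \sum_(l < (s - i - j - k).+1) K i j k (i + j + l)%N).
Proof.
rewrite (trisum_box _ (leqnn s)).
transitivity (\sum_(e < s.+1) \sum_(k < s.+1) \sum_(i < s.+1) \sum_(j < s.+1)
    (if ((e + k <= s) && (i + j <= e))%N then K i j k e else 0)).
  apply: eq_bigr => e _; apply: eq_bigr => k _; case: ifP => _; last first.
    by rewrite big1 // => i _; rewrite big1.
  by rewrite (trisum_box _ (_ : e <= s)%N) // -ltnS.
under eq_bigr => e _ do rewrite exchange_big.
under eq_bigr => e _ do under eq_bigr => i _ do rewrite exchange_big.
rewrite exchange_big; apply: eq_bigr => i _.
rewrite exchange_big; apply: eq_bigr => j _.
rewrite exchange_big; apply: eq_bigr => k _.
case: ifP => hijk; last by rewrite big1 // => e _; rewrite ifF //; lia.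
rewrite -(sum_window (N := s) (lo := (i + j)%N) (K i j k)); last lia.
by apply: eq_bigr => e _; congr (if _ then _ else _); lia.
Qed.

Lemma trisum_swap n (T : nat -> nat -> V) : trisum n T = trisum n (fun i j => T j i).
Proof.
rewrite !(trisum_box _ (leqnn n)) exchange_big.
by apply: eq_bigr => i _; apply: eq_bigr => j _; rewrite addnC.
Qed.

End TriangularSums.

Section Derivation.
Variable F : fieldType.
Variable d : F -> F.
Hypothesis derD : forall a b : F, d (a + b) = d a + d b.
Hypothesis derM : forall a b : F, d (a * b) = d a * b + a * d b.

Lemma der0 : d 0 = 0.
Proof. by apply: (addrI (d 0)); rewrite -derD !addr0. Qed.

Lemma derN a : d (- a) = - d a.
Proof. by apply/eqP; rewrite -subr_eq0 opprK -derD addNr der0. Qed.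

Lemma der1 : d 1 = 0.
Proof. by apply: (addrI (d 1)); have := derM 1 1; rewrite !mul1r mulr1 addr0 => <-. Qed.

Lemma der_sum (I : Type) (r : seq I) (P : pred I) (f : I -> F) :
  d (\sum_(i <- r | P i) f i) = \sum_(i <- r | P i) d (f i).
Proof. exact: (big_morph d derD der0). Qed.

Lemma der_nat n : d n%:R = 0.
Proof. by elim: n => [|n IH]; rewrite ?der0 // -natr1 derD IH der1 addr0. Qed.

Lemma der_int (z : int) : d z%:~R = 0.
Proof. by case: z => n; rewrite ?NegzE ?mulrNz ?derN der_nat ?oppr0. Qed.

Lemma der_mull c a : d c = 0 -> d (c * a) = c * d a.
Proof. by move=> dc; rewrite derM dc mul0r add0r. Qed.

Lemma der_inv c : d c = 0 -> d c^-1 = 0.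
Proof.
move=> dc; have [->|c_neq0] := eqVneq c 0; first by rewrite invr0 der0.
by apply: (mulfI c_neq0); rewrite -der_mull // divff // der1 mulr0.
Qed.

Lemma der_gbinom z l : d (gbinom F z l) = 0.
Proof.
have der_prod : d (\prod_(k < l) (z - k%:Z)%:~R) = 0.
  elim/big_ind: _ => [|x y dx0 dy0|i _]; first exact: der1; last exact: der_int.
  by rewrite derM dx0 dy0 mul0r mulr0 addr0.
by rewrite /gbinom derM der_inv ?der_nat // der_prod mul0r mulr0 addr0.
Qed.

Lemma iter_der0 l : iter l d 0 = 0.
Proof. by elim: l => //= l ->; rewrite der0. Qed.

Lemma iter_derD l a b : iter l d (a + b) = iter l d a + iter l d b.
Proof. by elim: l => //= l ->; rewrite derD. Qed.

Lemma iter_derN l a : iter l d (- a) = - iter l d a.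
Proof. by elim: l => //= l ->; rewrite derN. Qed.

Lemma iter_der_sum l (I : Type) (r : seq I) (P : pred I) (f : I -> F) :
  iter l d (\sum_(i <- r | P i) f i) = \sum_(i <- r | P i) iter l d (f i).
Proof. exact: (big_morph (iter l d) (iter_derD l) (iter_der0 l)). Qed.

Lemma iter_der_mull l c a : d c = 0 -> iter l d (c * a) = c * iter l d a.
Proof. by move=> dc; elim: l => //= l ->; rewrite der_mull. Qed.

Lemma iter_der1 l : iter l.+1 d 1 = 0.
Proof. by rewrite iterSr der1 iter_der0. Qed.

Lemma iter_der_leibniz m a b :
  iter m d (a * b) = \sum_(p < m.+1) 'C(m, p)%:R * (iter p d a * iter (m - p) d b).
Proof.
elim: m => [|m IH]; first by rewrite big_ord1 bin0 mul1r.
rewrite [LHS]/= IH der_sum.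
under eq_bigr => p _ do rewrite der_mull ?der_nat // derM mulrDr.
rewrite big_split /= [in RHS]big_ord_recl /= bin0 mul1r.
under [in RHS]eq_bigr => p _ do rewrite /bump /= add1n subSS binS natrD mulrDl.
rewrite big_split /= [RHS]addrA [LHS]addrC; congr (_ + _).
rewrite [LHS]big_ord_recl /= bin0 mul1r subn0.
rewrite [in RHS]big_ord_recr /= bin_small // mul0r addr0; congr (_ + _).
apply: eq_bigr => p _; rewrite /bump /= add1n.
by rewrite (_ : (m - p)%N = (m - p.+1).+1) //; have := ltn_ord p; lia.
Qed.

Hypothesis hchar : [pchar F] =i pred0.
Local Notation g := (gbinom F).

(* (X^a x) X^b y = X^a (x X^b y), compared at X^(a + b - r). *)
Lemma iter_der_gbinom_comp (a b : int) (x y : F) (r : nat) :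
  \sum_(l < r.+1) g a l * iter l d x * (g (a + b - l%:Z) (r - l) * iter (r - l) d y)
  = \sum_(q < r.+1) g a (r - q) * iter (r - q) d (x * (g b q * iter q d y)).
Proof.
pose T q p := g a (r - q) * 'C(r - q, p)%:R * g b q * (iter p d x * iter (r - p) d y).
transitivity (trisum r T); last first.
  apply: eq_bigr => q _; rewrite mulrCA iter_der_mull ?der_gbinom //.
  rewrite iter_der_leibniz !mulr_sumr; apply: eq_bigr => p _.
  rewrite -iterD (_ : (r - q - p + q = r - p)%N); last first.
    by have := ltn_ord p; have := ltn_ord q; lia.
  by rewrite /T; ring.
rewrite trisum_swap; apply: eq_bigr => p _; rewrite /T -big_distrl /=.
by rewrite gbinom_convolution //; [ring | rewrite -ltnS].
Qed.

End Derivation.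

Section Coefficients.
Variable F : fieldType.
Implicit Types (A B : psdo F) (t m : int).

Lemma ps_coef_ord A (i : nat) : ps_coef A (ps_ord A - i%:Z) = ps_co A i.
Proof. by rewrite /ps_coef ifT; [congr (ps_co A _) | ]; lia. Qed.

Lemma ps_coef_gt A t : ps_ord A < t -> ps_coef A t = 0.
Proof. by rewrite /ps_coef ltNge => /negbTE ->. Qed.

Lemma ps_coef_le A t : t <= ps_ord A -> ps_coef A t = ps_co A `|ps_ord A - t|%N.
Proof. by rewrite /ps_coef => ->. Qed.

Lemma ps_coef_zero t : ps_coef (ps_zero F) t = 0.
Proof. by rewrite /ps_coef; case: ifP. Qed.

Lemma ps_coef_add A B t : ps_coef (ps_add A B) t = ps_coef A t + ps_coef B t.
Proof.
rewrite {1}/ps_coef /=; set o := Num.max _ _; case: ifP => le_to.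
  by rewrite (_ : o - `|o - t|%N%:Z = t) //; lia.
by rewrite !ps_coef_gt ?addr0 //; lia.
Qed.

Lemma ps_co_opp A s : ps_co (ps_opp A) s = - ps_co A s.
Proof. by []. Qed.

Lemma ps_coef_opp A t : ps_coef (ps_opp A) t = - ps_coef A t.
Proof. by rewrite /ps_coef /=; case: ifP; rewrite ?oppr0. Qed.

Lemma ps_coef_map (f : F -> F) A t : f 0 = 0 -> ps_coef (ps_map f A) t = f (ps_coef A t).
Proof. by rewrite /ps_coef /=; case: ifP. Qed.

Lemma ps_coef_sum (I : Type) (r : seq I) (P : pred I) (f : I -> psdo F) t :
  ps_coef (\big[@ps_add F/ps_zero F]_(i <- r | P i) f i) t = \sum_(i <- r | P i) ps_coef (f i) t.
Proof.
exact: (big_morph (fun A => ps_coef A t) (fun A B => ps_coef_add A B t) (ps_coef_zero t)).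
Qed.

Lemma ps_eq_sym A B : ps_eq A B -> ps_eq B A.
Proof. by move=> eqAB t. Qed.

Lemma ps_eq_shift A B (d : nat) : ps_ord A = ps_ord B + d%:Z ->
  (forall s, (s < d)%N -> ps_co A s = 0) ->
  (forall s, ps_co A (s + d) = ps_co B s) -> ps_eq A B.
Proof.
move=> ordA A0 shiftA t; case: (leP t (ps_ord B)) => [leBt | ltBt].
  by rewrite !ps_coef_le -?shiftA; [congr (ps_co A _) | | ]; lia.
rewrite [RHS]ps_coef_gt //; case: (leP t (ps_ord A)) => [leAt | ?]; last exact: ps_coef_gt.
by rewrite ps_coef_le // A0 //; lia.
Qed.

Lemma ps_eq_co A B : ps_ord A = ps_ord B -> ps_co A =1 ps_co B -> ps_eq A B.
Proof.
move=> ordAB coAB; apply: (ps_eq_shift (d := 0)) => [|//|s]; first by rewrite ordAB addr0.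
by rewrite addn0 coAB.
Qed.

Lemma ps_eq_add_co A B C : ps_ord B = ps_ord A -> ps_ord C = ps_ord A ->
  (forall s, ps_co A s = ps_co B s + ps_co C s) -> ps_eq A (ps_add B C).
Proof.
move=> ordB ordC coA t; rewrite ps_coef_add.
case: (leP t (ps_ord A)) => leAt; first by rewrite !ps_coef_le ?ordB ?ordC // coA.
by rewrite !ps_coef_gt ?addr0 ?ordB ?ordC.
Qed.

Definition ps_vanish A m := forall t, m < t -> ps_coef A t = 0.

Lemma ps_vanish_ord A : ps_vanish A (ps_ord A).
Proof. exact: ps_coef_gt. Qed.

Lemma ps_vanish_eq A B m : ps_eq A B -> ps_vanish A m -> ps_vanish B m.
Proof. by move=> eqAB vA t lt_mt; rewrite -eqAB vA. Qed.

(* ps_mul acts on representations, not on series; its compatibility with ps_eq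
   goes through rewriting both factors with a common nominal order m. *)
Definition ps_reord A m : psdo F := PSDO m (fun i => ps_coef A (m - i%:Z)).

Lemma ps_reord_eq A m : ps_vanish A m -> ps_eq (ps_reord A m) A.
Proof.
move=> vA t; rewrite {1}/ps_coef /=; case: ifPn => le_tm; last by rewrite vA //; lia.
by congr (ps_coef A _); lia.
Qed.

Definition ps_lead A t a := ps_vanish A t /\ ps_coef A t = a.

Lemma ps_lead_eq A B t a : ps_eq A B -> ps_lead A t a -> ps_lead B t a.
Proof. by move=> eqAB [vA cA]; split; [apply: ps_vanish_eq vA | rewrite -eqAB]. Qed.

Lemma ps_lead_add A B t a b : ps_lead A t a -> ps_lead B t b -> ps_lead (ps_add A B) t (a + b).
Proof.
move=> [vA cA] [vB cB]; split; last by rewrite ps_coef_add cA cB.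
by move=> t' lt_tt'; rewrite ps_coef_add vA // vB // addr0.
Qed.

Lemma ps_lead_exists A t : ps_coef A t != 0 -> exists2 t1, ps_coef A t1 != 0 & ps_vanish A t1.
Proof.
move=> At_neq0.
have exP : exists i : nat, ps_coef A (t + i%:Z) != 0 by exists 0%N; rewrite addr0.
have ubP i : ps_coef A (t + i%:Z) != 0 -> (i <= `|ps_ord A - t|)%N.
  by apply: contraR; rewrite -ltnNge => lt_i; rewrite ps_coef_gt //; lia.
have [i Ai_neq0 maxi] := ex_maxnP exP ubP.
exists (t + i%:Z) => // t' lt_t'; apply/eqP; apply: contraT => At'_neq0.
by have := maxi `|t' - t|%N; rewrite (_ : t + _ = t') //; [move/(_ At'_neq0); lia | lia].
Qed.

End Coefficients.

Section Composition.
Variable F : fieldType.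
Hypothesis hchar : [pchar F] =i pred0.
Variable dx : F -> F.
Hypothesis dxD : forall a b : F, dx (a + b) = dx a + dx b.
Hypothesis dxM : forall a b : F, dx (a * b) = dx a * b + a * dx b.

Local Notation mul := (ps_mul dx).
Local Notation g := (gbinom F).
Implicit Types (A B C : psdo F) (m : int).

Lemma ps_co_mul A B s : ps_co (mul A B) s = trisum s (fun i j =>
  ps_co A i * g (ps_ord A - i%:Z) (s - i - j) * iter (s - i - j) dx (ps_co B j)).
Proof. by []. Qed.

Lemma ps_mul_reordl A B m : ps_vanish A m -> m <= ps_ord A ->
  ps_eq (mul A B) (mul (ps_reord A m) B).
Proof.
move=> vA le_mA; pose d := `|ps_ord A - m|%N.
have A0 i : (i < d)%N -> ps_co A i = 0 by move=> lt_id; rewrite -ps_coef_ord vA //; lia.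
apply: (ps_eq_shift (d := d)); first by rewrite /=; lia.
  by move=> s lt_sd; rewrite ps_co_mul trisum_eq0 // => i j ?; rewrite A0 ?mul0r //; lia.
move=> s; rewrite ps_co_mul trisum_shiftl; last by move=> i j /A0 ->; rewrite !mul0r.
rewrite ps_co_mul; apply: eq_trisum => i j _ /=; rewrite -ps_coef_ord.
by congr (ps_coef A _ * g _ _ * iter _ dx _); lia.
Qed.

Lemma ps_mul_reordr A B m : ps_vanish B m -> m <= ps_ord B ->
  ps_eq (mul A B) (mul A (ps_reord B m)).
Proof.
move=> vB le_mB; pose d := `|ps_ord B - m|%N.
have B0 i : (i < d)%N -> ps_co B i = 0 by move=> lt_id; rewrite -ps_coef_ord vB //; lia.
apply: (ps_eq_shift (d := d)); first by rewrite /=; lia.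
  move=> s lt_sd; rewrite ps_co_mul trisum_eq0 // => i j ?.
  by rewrite B0 ?iter_der0 ?mulr0 //; lia.
move=> s; rewrite ps_co_mul trisum_shiftr; last by move=> i j /B0 ->; rewrite iter_der0 ?mulr0.
rewrite ps_co_mul; apply: eq_trisum => i j _ /=; rewrite -[ps_co B _]ps_coef_ord.
by congr (_ * g _ _ * iter _ dx (ps_coef B _)); lia.
Qed.

Lemma ps_vanish_min A A' : ps_eq A A' -> ps_vanish A (Num.min (ps_ord A) (ps_ord A')).
Proof.
move=> eqA t lt_t; case: (ltP (ps_ord A) t) => [|le_tA]; first exact: ps_coef_gt.
by rewrite eqA ps_coef_gt //; lia.
Qed.

Lemma ps_mul_eql A A' B : ps_eq A A' -> ps_eq (mul A B) (mul A' B).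
Proof.
move=> eqA; set m := Num.min (ps_ord A) (ps_ord A').
have vA' : ps_vanish A' m by rewrite /m minC; apply: ps_vanish_min.
have eq_reord : ps_eq (mul (ps_reord A m) B) (mul (ps_reord A' m) B).
  by apply: ps_eq_co => // s; rewrite !ps_co_mul; apply: eq_trisum => i j _ /=; rewrite eqA.
move=> t; rewrite (ps_mul_reordl B (ps_vanish_min eqA)) ?ge_min ?lexx //.
by rewrite (ps_mul_reordl B vA') ?ge_min ?lexx ?orbT.
Qed.

Lemma ps_mul_eqr A B B' : ps_eq B B' -> ps_eq (mul A B) (mul A B').
Proof.
move=> eqB; set m := Num.min (ps_ord B) (ps_ord B').
have vB' : ps_vanish B' m by rewrite /m minC; apply: ps_vanish_min.
have eq_reord : ps_eq (mul A (ps_reord B m)) (mul A (ps_reord B' m)).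
  by apply: ps_eq_co => // s; rewrite !ps_co_mul; apply: eq_trisum => i j _ /=; rewrite eqB.
move=> t; rewrite (ps_mul_reordr A (ps_vanish_min eqB)) ?ge_min ?lexx //.
by rewrite (ps_mul_reordr A vB') ?ge_min ?lexx ?orbT.
Qed.

Lemma ps_mul_eq A A' B B' : ps_eq A A' -> ps_eq B B' -> ps_eq (mul A B) (mul A' B').
Proof. by move=> eqA eqB t; rewrite (ps_mul_eql B eqA) (ps_mul_eqr A' eqB). Qed.

Lemma ps_lead_mul A B (al be : int) a b :
  ps_lead A al a -> ps_lead B be b -> ps_lead (mul A B) (al + be) (a * b).
Proof.
move=> [vA cA] [vB cB].
have eqAB : ps_eq (mul (ps_reord A al) (ps_reord B be)) (mul A B).
  by apply: ps_mul_eq; apply: ps_reord_eq.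
apply: ps_lead_eq eqAB _; split; first exact: ps_vanish_ord.
rewrite -[al + be]subr0 ps_coef_ord ps_co_mul /trisum !big_ord1 gbinom0.
by rewrite /= !subr0 mulr1 cA cB.
Qed.

Lemma ps_mulDl A B C : ps_eq (mul (ps_add A B) C) (ps_add (mul A C) (mul B C)).
Proof.
set N := Num.max (ps_ord A) (ps_ord B).
have vA : ps_vanish A N by move=> t lt_Nt; rewrite ps_coef_gt //; lia.
have vB : ps_vanish B N by move=> t lt_Nt; rewrite ps_coef_gt //; lia.
have eq_reord : ps_eq (mul (ps_add A B) C) (ps_add (mul (ps_reord A N) C) (mul (ps_reord B N) C)).
  apply: ps_eq_add_co => // s; rewrite !ps_co_mul -trisumD.
  by apply: eq_trisum => i j _ /=; rewrite !mulrDl.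
by move=> t; rewrite eq_reord !ps_coef_add !(ps_mul_eql C (ps_reord_eq _)).
Qed.

Lemma ps_mulDr A B C : ps_eq (mul A (ps_add B C)) (ps_add (mul A B) (mul A C)).
Proof.
set N := Num.max (ps_ord B) (ps_ord C).
have vB : ps_vanish B N by move=> t lt_Nt; rewrite ps_coef_gt //; lia.
have vC : ps_vanish C N by move=> t lt_Nt; rewrite ps_coef_gt //; lia.
have eq_reord : ps_eq (mul A (ps_add B C)) (ps_add (mul A (ps_reord B N)) (mul A (ps_reord C N))).
  apply: ps_eq_add_co => // s; rewrite !ps_co_mul -trisumD.
  by apply: eq_trisum => i j _ /=; rewrite iter_derD // !mulrDr.
by move=> t; rewrite eq_reord !ps_coef_add !(ps_mul_eqr A (ps_reord_eq _)).
Qed.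

Lemma ps_mulNl A B : ps_eq (mul (ps_opp A) B) (ps_opp (mul A B)).
Proof.
apply: ps_eq_co => // s; rewrite ps_co_opp !ps_co_mul -trisumN.
by apply: eq_trisum => i j _; rewrite !mulNr.
Qed.

Lemma ps_mulNr A B : ps_eq (mul A (ps_opp B)) (ps_opp (mul A B)).
Proof.
apply: ps_eq_co => // s; rewrite ps_co_opp !ps_co_mul -trisumN.
by apply: eq_trisum => i j _; rewrite iter_derN // mulrN.
Qed.

Lemma ps_mul1l B : ps_eq (mul (ps_one F) B) B.
Proof.
apply: ps_eq_co => [|s]; first by rewrite /= add0r.
rewrite ps_co_mul /trisum big_ord_recl /= [X in _ + X]big1 ?addr0 => [|i _]; last first.
  by rewrite big1 // => j _; rewrite !mul0r.
rewrite subn0 big_ord_recr /= subnn gbinom0 mul1r big1 ?add0r ?mul1r // => j _.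
rewrite (_ : (s - j)%N = (s - j.+1).+1); last by have := ltn_ord j; lia.
by rewrite gbinom0S // mulr0 mul0r.
Qed.

Lemma ps_mul1r A : ps_eq (mul A (ps_one F)) A.
Proof.
apply: ps_eq_co => [|s]; first by rewrite /= addr0.
rewrite ps_co_mul /trisum big_ord_recr /= subnn big_ord1 gbinom0 /= mulr1 mulr1.
rewrite big1 ?add0r // => i _; rewrite big_ord_recl big1 ?addr0 => [|j _]; last first.
  by rewrite iter_der0 // mulr0.
rewrite (_ : (s - i - 0)%N = (s - i.+1).+1); last by have := ltn_ord i; lia.
by rewrite iter_der1 // mulr0.
Qed.

(* The contribution of A_i, B_j and C_k to the s-th coefficient of A B C. *)
Definition ps_assoc_term A B C s i j k : F :=
  let r := (s - i - j - k)%N in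
  ps_co A i * \sum_(l < r.+1) g (ps_ord A - i%:Z) l * iter l dx (ps_co B j) *
    (g (ps_ord A - i%:Z + (ps_ord B - j%:Z) - l%:Z) (r - l) * iter (r - l) dx (ps_co C k)).

Lemma ps_co_mulA_l A B C s :
  ps_co (mul (mul A B) C) s = trisum3 s (ps_assoc_term A B C s).
Proof.
pose H i j k e := ps_co A i * g (ps_ord A - i%:Z) (e - i - j) *
  iter (e - i - j) dx (ps_co B j) *
  (g (ps_ord A + ps_ord B - e%:Z) (s - e - k) * iter (s - e - k) dx (ps_co C k)).
transitivity (trisum s (fun e k => trisum e (fun i j => H i j k e))).
  rewrite ps_co_mul; apply: eq_trisum => e k _; rewrite ps_co_mul /trisum -mulrA mulr_suml.
  by apply: eq_bigr => i _; rewrite mulr_suml.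
rewrite trisum_nested; apply: eq_trisum3 => i j k le_ijk.
rewrite /ps_assoc_term /H mulr_sumr; apply: eq_bigr => l _; have := ltn_ord l => lt_l.
have [-> -> ->] : [/\ (i + j + l - i - j = l)%N, (s - (i + j + l) - k = s - i - j - k - l)%N &
    ps_ord A + ps_ord B - (i + j + l)%N%:Z = ps_ord A - i%:Z + (ps_ord B - j%:Z) - l%:Z].
  by split; lia.
by rewrite !mulrA.
Qed.

Lemma ps_co_mulA_r A B C s :
  ps_co (mul A (mul B C)) s = trisum3 s (ps_assoc_term A B C s).
Proof.
pose H i j k f := ps_co A i * g (ps_ord A - i%:Z) (s - i - f) * iter (s - i - f) dx
  (ps_co B j * g (ps_ord B - j%:Z) (f - j - k) * iter (f - j - k) dx (ps_co C k)).
transitivity (trisum s (fun f i => trisum f (fun j k => H i j k f))).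
  rewrite ps_co_mul trisum_swap; apply: eq_trisum => f i _.
  rewrite ps_co_mul /trisum iter_der_sum // mulr_sumr; apply: eq_bigr => j _.
  by rewrite iter_der_sum // mulr_sumr.
rewrite trisum_nested -[RHS]trisum3_rot; apply: eq_trisum3 => j k i le_jki.
rewrite /ps_assoc_term iter_der_gbinom_comp // mulr_sumr.
rewrite (_ : s - j - k - i = s - i - j - k)%N; last lia.
apply: eq_bigr => q _; rewrite /H; have := ltn_ord q => lt_q.
have [-> ->] : (s - i - (j + k + q) = s - i - j - k - q)%N /\ (j + k + q - j - k = q)%N.
  by split; lia.
by rewrite !mulrA.
Qed.

Lemma ps_mulA A B C : ps_eq (mul (mul A B) C) (mul A (mul B C)).
Proof.
apply: ps_eq_co => [|s]; first by rewrite /= addrA.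
by rewrite ps_co_mulA_l ps_co_mulA_r.
Qed.

Lemma ps_lead_one : ps_lead (ps_one F) 0 1.
Proof. by split; [exact: ps_vanish_ord | rewrite /ps_coef]. Qed.

Lemma ps_lead_exp (R : psdo F) (rho : int) r k :
  ps_lead R rho r -> ps_lead (ps_exp dx R k) (rho * k%:Z) (r ^+ k).
Proof.
move=> leadR; elim: k => [|k IH]; first by rewrite mulr0 expr0; apply: ps_lead_one.
by rewrite exprS (_ : rho * k.+1%:Z = rho + rho * k%:Z); [apply: ps_lead_mul | lia].
Qed.

End Composition.

Section CommutatorWithM.
Variable F : fieldType.
Hypothesis hchar : [pchar F] =i pred0.
Variables dx dy : F -> F.
Hypothesis dxD : forall a b : F, dx (a + b) = dx a + dx b.
Hypothesis dxM : forall a b : F, dx (a * b) = dx a * b + a * dx b.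
Hypothesis dyD : forall a b : F, dy (a + b) = dy a + dy b.
Hypothesis dyM : forall a b : F, dy (a * b) = dy a * b + a * dy b.
Hypothesis dxy : forall a : F, dx (dy a) = dy (dx a).

Local Notation mul := (ps_mul dx).
Implicit Types (A B R X : psdo F).

Lemma ps_map_dy_mul A B :
  ps_eq (ps_map dy (mul A B)) (ps_add (mul (ps_map dy A) B) (mul A (ps_map dy B))).
Proof.
have dy_iter l a : dy (iter l dx a) = iter l dx (dy a) by elim: l => //= l <-.
apply: ps_eq_add_co => // s; rewrite /= der_sum // -big_split; apply: eq_bigr => i _.
rewrite der_sum // -big_split; apply: eq_bigr => j _ /=.
by rewrite dyM (dyM (ps_co A i)) (der_gbinom dyD dyM) dy_iter; ring.
Qed.

Variable W : psdo F.

(* [X, Y + W] = X W - W X - dX/dy, because Y a = a Y + da/dy. *)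
Definition ps_commM X : psdo F := ps_add (mul X W) (ps_opp (ps_add (mul W X) (ps_map dy X))).

Lemma ps_coef_commM X t :
  ps_coef (ps_commM X) t = ps_coef (mul X W) t - (ps_coef (mul W X) t + dy (ps_coef X t)).
Proof. by rewrite ps_coef_add ps_coef_opp ps_coef_add ps_coef_map ?der0. Qed.

Lemma ps_commM_eq X X' : ps_eq X X' -> ps_eq (ps_commM X) (ps_commM X').
Proof.
by move=> eqX t; rewrite !ps_coef_commM (ps_mul_eql _ W eqX) (ps_mul_eqr dxD W eqX) eqX.
Qed.

Lemma ps_commM_mul R B :
  ps_eq (ps_commM (mul R B)) (ps_add (mul R (ps_commM B)) (mul (ps_commM R) B)).
Proof.
move=> t; rewrite ps_coef_commM ps_coef_add.
rewrite (ps_mulDr dxD) ps_coef_add (ps_mulNr dxD) ps_coef_opp (ps_mulDr dxD) ps_coef_add.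
rewrite /ps_commM (ps_mulDl dx) ps_coef_add (ps_mulNl dx) ps_coef_opp (ps_mulDl dx) ps_coef_add.
rewrite -ps_coef_map ?der0 // ps_map_dy_mul ps_coef_add.
rewrite (ps_mulA hchar dxD dxM R B W) -(ps_mulA hchar dxD dxM W R B).
rewrite (ps_mulA hchar dxD dxM R W B).
ring.
Qed.

Lemma ps_lead_commM_exp R (rho m : int) r c k :
  ps_lead R rho r -> ps_lead (ps_commM R) m c ->
  ps_lead (ps_commM (ps_exp dx R k.+1)) (m + rho * k%:Z) (k.+1%:R * r ^+ k * c).
Proof.
move=> leadR leadC; elim: k => [|k IH].
  apply: ps_lead_eq (ps_commM_eq (ps_eq_sym (ps_mul1r dxD dxM R))) _.
  by rewrite mulr0 addr0 expr0 !mul1r.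
apply: ps_lead_eq (ps_eq_sym (ps_commM_mul R (ps_exp dx R k.+1))) _.
have lead1 := ps_lead_mul dxD leadR IH.
have lead2 := ps_lead_mul dxD leadC (ps_lead_exp dxD k.+1 leadR).
rewrite (_ : rho + (m + rho * k%:Z) = m + rho * k.+1%:Z) in lead1; last lia.
suff -> : k.+2%:R * r ^+ k.+1 * c = r * (k.+1%:R * r ^+ k * c) + c * r ^+ k.+1.
  exact: ps_lead_add lead1 lead2.
by rewrite exprS [k.+2%:R]mulrS; ring.
Qed.

Lemma ps_commM_exp_neq0 R k t t' : ps_coef R t != 0 -> ps_coef (ps_commM R) t' != 0 ->
  exists t'', ps_coef (ps_commM (ps_exp dx R k.+1)) t'' != 0.
Proof.
move=> /ps_lead_exists[rho Rrho vR] /ps_lead_exists[m Cm vC].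
exists (m + rho * k%:Z).
have [_ ->] := ps_lead_commM_exp k (conj vR erefl) (conj vC erefl).
by rewrite !mulf_neq0 ?expf_neq0 ?natF_neq0.
Qed.

End CommutatorWithM.

Section CommutatorInY.
Variable F : fieldType.
Hypothesis hchar : [pchar F] =i pred0.
Variables dx dy : F -> F.
Hypothesis dxD : forall a b : F, dx (a + b) = dx a + dx b.
Hypothesis dxM : forall a b : F, dx (a * b) = dx a * b + a * dx b.
Hypothesis dyD : forall a b : F, dy (a + b) = dy a + dy b.
Variables (u : F) (X : psdo F).

Local Notation W := (ps_opp (ps_mul dx (ps_Xpow F (-1)) (ps_const u))).
Local Notation comm := (psy_comm dx dy [:: X] (Mop dx u)).
Local Notation nth0 := (nth (ps_zero F)).

Lemma size_psy_comm_M : size comm = 3%N.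
Proof. by rewrite /psy_comm /psy_add size_mkseq /psy_opp size_map !size_mkseq. Qed.

Lemma nth_psy_comm_M k : (k < 3)%N -> nth0 comm k =
  ps_add (nth0 (psy_mul dx dy [:: X] (Mop dx u)) k)
         (ps_opp (nth0 (psy_mul dx dy (Mop dx u) [:: X]) k)).
Proof.
move=> lt_k3; rewrite /psy_comm /psy_add nth_mkseq; last by rewrite /psy_opp size_map !size_mkseq.
by rewrite /psy_opp (nth_map (ps_zero F)) // size_mkseq.
Qed.

Lemma ps_map_iter0 (A : psdo F) : ps_map (iter 0 dy) A = A.
Proof. by case: A. Qed.

Lemma psy_comm_M0 t : ps_coef (nth0 comm 0) t = ps_coef (ps_commM dx dy W X) t.
Proof.
rewrite [RHS]ps_coef_commM // nth_psy_comm_M // ps_coef_add ps_coef_opp.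
rewrite /psy_mul !nth_mkseq // !ps_coef_sum.
rewrite !big_ord_recl !big_ord0 /= !ps_coef_add !ps_coef_zero !ps_coef_sum !big_mkcond /=.
rewrite !big_ord_recl !big_ord0 /= !ps_coef_map ?mul0rn //= !ps_map_iter0.
rewrite big_mkcond !big_ord_recl big_ord0 /= !ps_coef_map ?mul0rn //= !mulr1n.
rewrite (ps_mul1l hchar) ps_coef_map; last exact: der0.
by rewrite /=; ring.
Qed.

Lemma psy_comm_M1 t : ps_coef (nth0 comm 1) t = 0.
Proof.
rewrite nth_psy_comm_M // ps_coef_add ps_coef_opp /psy_mul !nth_mkseq // !ps_coef_sum.
rewrite !big_ord_recl !big_ord0 /=.
rewrite !ps_coef_add !ps_coef_zero !ps_coef_sum !big_mkcond /= !big_ord_recl !big_ord0 /bump /=.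
rewrite !ps_coef_map ?mul0rn ?oppr0 //= !big_mkcond !big_ord_recl !big_ord0 /=.
rewrite addn0 big_mkcond !big_ord_recl big_ord0 /=.
rewrite !ps_coef_map ?mul0rn //= /bump /= !bin0 !mulr1n !ps_map_iter0.
rewrite (ps_mul1r dxD dxM) (ps_mul1l hchar).
ring.
Qed.

Lemma psy_comm_M2 t : ps_coef (nth0 comm 2) t = 0.
Proof.
rewrite nth_psy_comm_M // ps_coef_add ps_coef_opp /psy_mul !nth_mkseq // !ps_coef_sum.
rewrite !big_ord_recl !big_ord0 /=.
rewrite !ps_coef_add !ps_coef_zero !ps_coef_sum !big_mkcond /= !big_ord_recl !big_ord0 /bump /=.
rewrite ?addn0 !big1 ?addr0 ?subrr //.
all: by move=> [[|[|k]] hk] //=; rewrite ?addn0.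
Qed.

Lemma psy_comm_M_default k : (3 <= k)%N -> nth0 comm k = ps_zero F.
Proof. by move=> le3k; rewrite nth_default // size_psy_comm_M. Qed.

End CommutatorInY.

Theorem lemma2 (F : fieldType) (dx dy : F -> F)
  (hchar : [pchar F] =i pred0)
  (dxD : forall a b : F, dx (a + b) = dx a + dx b)
  (dxM : forall a b : F, dx (a * b) = dx a * b + a * dx b)
  (dyD : forall a b : F, dy (a + b) = dy a + dy b)
  (dyM : forall a b : F, dy (a * b) = dy a * b + a * dy b)
  (dxy : forall a : F, dx (dy a) = dy (dx a))
  (u : F) (n : nat) (hn : (1 <= n)%N) (P R : psdo F)
  (hP : ps_order P n%:Z)
  (hPM : psy_eq (psy_comm dx dy [:: P] (Mop dx u)) [::])
  (hR : ps_eq (ps_exp dx R n) P) :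
  psy_eq (psy_comm dx dy [:: R] (Mop dx u)) [::].
Proof.
set W := ps_opp (ps_mul dx (ps_Xpow F (-1)) (ps_const u)).
move=> k t; rewrite nth_nil ps_coef_zero.
case: k => [|[|[|k]]]; last by rewrite psy_comm_M_default // ps_coef_zero.
- rewrite psy_comm_M0 //; apply/eqP; apply: contraT => commR_neq0.
  have R_eq0 t' : ps_coef R t' = 0.
    apply/eqP; apply: contraT => /(ps_commM_exp_neq0 hchar dxD dxM dyD dyM dxy (n.-1)).
    case/(_ _ _ commR_neq0) => t''; rewrite prednK // (ps_commM_eq dxD dyD W hR).
    by rewrite -psy_comm_M0 // hPM nth_nil ps_coef_zero eqxx.
  have [vRn _] := ps_lead_exp dxD n (conj (fun t' _ => R_eq0 t') (R_eq0 0) : ps_lead R 0 0).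
  by case: hP => /negP[]; rewrite -hR vRn // mul0r ltz_nat.
- by rewrite psy_comm_M1.
- by rewrite psy_comm_M2.
Qed.
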